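(* Let $X$ be a real reflexive Banach space and let $\Omega_1,\Omega_2\subset X$ be closed convex sets such that $\operatorname{int}(\Omega_1-\Omega_2)\neq\emptyset$ and $0\in\operatorname{core}(\Omega_1-\Omega_2)$. Then for every $\bar x\in\Omega_1\cap\Omega_2$ there exists a bounded convex neighborhood $V$ of $\bar x$ such that $0\in\operatorname{int}\big(\Omega_1-(\Omega_2\cap V)\big)$.
   Context: For sets $A,B$, $A-B=\{a-b\mid a\in A,b\in B\}$; $\operatorname{int}$ is the topological interior. The (algebraic) core of a set $\Omega\subset X$ is $\operatorname{core}\Omega=\{x\in\Omega\mid \forall v\in X\ \exists\gamma>0 \text{ such that } x+tv\in\Omega \text{ whenever } |t|<\gamma\}$. *)

From HB Require Import structures.
From mathcomp Require Import all_boot all_order all_algebra.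
From mathcomp Require Import all_classical all_reals all_analysis.
Set Implicit Arguments. Unset Strict Implicit. Unset Printing Implicit Defensive.
Import Order.TTheory GRing.Theory Num.Theory.
Import numFieldNormedType.Exports.
Local Open Scope classical_set_scope.
Local Open Scope ring_scope.

Definition setMinus {R : numDomainType} {X : lmodType R} (A B : set X) : set X :=
  [set z | exists a, exists b, A a /\ B b /\ z = a - b].

Definition core {R : realType} {X : normedModType R} (O : set X) : set X :=
  [set x | O x /\ forall v : X, exists2 g : R, 0 < g &
       forall t : R, `|t| < g -> O (x + t *: v)].

Definition convexS {R : realType} {X : normedModType R} (A : set X) : Prop :=
  @convex_set R X (A : set (convex_lmodType X)).

Definition dual_elt {R : realType} {X : normedModType R} (f : X -> R) : Prop :=
  linear_for *%R f /\ continuous f.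

(* phi : X* -> R is a bounded linear functional on X* (w.r.t. the operator norm):
   linear on X*, and there is C with |phi f| <= C * M whenever |f x| <= M ||x|| for all x
   (i.e. |phi f| <= C ||f||_{X*}). *)
Definition bidual_elt {R : realType} {X : normedModType R} (phi : (X -> R) -> R) : Prop :=
  (forall f g, dual_elt f -> dual_elt g -> phi (f \+ g) = phi f + phi g) /\
  (forall (a : R) f, dual_elt f -> phi (fun x => a * f x) = a * phi f) /\
  exists C : R, forall f (M : R), dual_elt f ->
     (forall x, `|f x| <= M * `|x|) -> `|phi f| <= C * M.

Definition reflexive_space {R : realType} (X : normedModType R) : Prop :=
  forall phi : (X -> R) -> R, bidual_elt phi ->
    exists x : X, forall f, dual_elt f -> phi f = f x.

From HB Require Import structures.
From mathcomp Require Import all_boot all_order all_algebra.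
From mathcomp Require Import all_classical all_reals all_analysis.
From mathcomp Require Import ring lra.
Import Order.TTheory GRing.Theory Num.Theory.
Import numFieldNormedType.Exports.
Local Open Scope classical_set_scope.
Local Open Scope ring_scope.

(* Since 0 is in the core of Omega1 - Omega2, the convex set
   K = Omega1 - (Omega2 ∩ B(xbar, 1)) is absorbing, and by Baire's theorem the
   closure of an absorbing convex set in a Banach space contains a ball B(0, eps).
   A Robinson–Ursescu iteration removes the closure: approximate y by a_0 - b_0,
   then the doubled defect 2(y - (a_0 - b_0)) by a_1 - b_1, and so on.  The series
   sum 2^-(n+1) a_n and sum 2^-(n+1) b_n converge (the b_n are bounded), their
   limits lie in the closed convex sets Omega1 and Omega2 ∩ B[xbar, 1], and their
   difference is y / 2.  Hence B(0, eps / 2) ⊆ Omega1 - (Omega2 ∩ B(xbar, 2)). *)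

Section NormedSpace.
Context {R : realType} {X : normedModType R}.
Implicit Types (A B C : set X) (x y c : X) (l r : R).

Lemma convexSP A : convexS A <->
  forall x y l, 0 <= l <= 1 -> A x -> A y -> A (l *: x + (1 - l) *: y).
Proof.
split=> [cA x y l /andP[l0 l1] Ax Ay | cA x y t].
  have t01 : Itv.spec (@Itv.num_sem R) (Itv.Real `[0, 1]%Z) l.
    by rewrite /Itv.spec /Itv.num_sem /= num_real /= in_itv /= l0 l1.
  by have := cA x y (Itv.mk t01); rewrite !inE; apply.
rewrite !inE => Ax Ay; apply: cA => //.
by rewrite ge0 le1.
Qed.

Lemma convexS_mid {A x y} : convexS A -> A x -> A y -> A (2^-1 *: x + 2^-1 *: y).
Proof.
move=> /convexSP cA Ax Ay.
have h : 0 <= (2^-1 : R) <= 1 by rewrite invr_ge0 invf_le1 ?ler1n ?ler0n.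
by have := cA x y 2^-1 h Ax Ay; rewrite {2}(splitr 1) div1r addrK.
Qed.

Lemma convexS_setI {A B} : convexS A -> convexS B -> convexS (A `&` B).
Proof.
move=> /convexSP cA /convexSP cB; apply/convexSP => x y l l01 [Ax Bx] [Ay By].
by split; [apply: cA | apply: cB].
Qed.

Lemma convexS_setMinus {A B} : convexS A -> convexS B -> convexS (setMinus A B).
Proof.
move=> /convexSP cA /convexSP cB; apply/convexSP.
move=> _ _ l l01 [a [b [Aa [Bb ->]]]] [a' [b' [Aa' [Bb' ->]]]].
exists (l *: a + (1 - l) *: a'), (l *: b + (1 - l) *: b').
by split; [apply: cA | split; [apply: cB | rewrite !scalerBr opprD addrACA]].
Qed.

Lemma setMinusS A A' B B' :
  A `<=` A' -> B `<=` B' -> setMinus A B `<=` setMinus A' B'.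
Proof.
move=> AA' BB' _ [a [b [Aa [Bb ->]]]].
by exists a, b; split; [apply: AA' | split; [apply: BB' |]].
Qed.

Lemma norm_sub_conv c x y l : 0 <= l <= 1 ->
  `|c - (l *: x + (1 - l) *: y)| <= l * `|c - x| + (1 - l) * `|c - y|.
Proof.
move=> /andP[l0 l1].
have -> : c - (l *: x + (1 - l) *: y) = l *: (c - x) + (1 - l) *: (c - y).
  by rewrite !scalerBr opprD addrACA -scalerDl subrKC scale1r.
by rewrite (le_trans (ler_normD _ _)) // !normrZ !ger0_norm ?subr_ge0.
Qed.

Lemma convexS_ball c r : convexS (ball c r).
Proof.
apply/convexSP => x y l l01; rewrite -ball_normE /ball_ /= => cx cy.
rewrite (le_lt_trans (norm_sub_conv c x y l l01)) //.
have : Num.max `|c - x| `|c - y| < r by rewrite gt_max cx cy.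
have := le_max `|c - x| `|c - x| `|c - y|; have := le_max `|c - y| `|c - x| `|c - y|.
rewrite !lexx orbT /=.
case/andP: l01 => l0 l1; nra.
Qed.

Lemma convexS_closed_ball c r : convexS (closed_ball_ Num.norm c r).
Proof.
apply/convexSP => x y l l01; rewrite /closed_ball_ /= => cx cy.
rewrite (le_trans (norm_sub_conv c x y l l01)) //.
case/andP: l01 => l0 l1; nra.
Qed.

Lemma ler_norm_dist c x : `|x| <= `|c| + `|c - x|.
Proof. by rewrite -[x in `|x|](subKr c) ler_normB. Qed.

Lemma bounded_ball c r : bounded_set (ball c r).
Proof.
rewrite /bounded_set /bounded_near; near=> M => x; rewrite -ball_normE /ball_ /= => cx.
apply: le_trans (ler_norm_dist c x) (le_trans (lerD (lexx _) (ltW cx)) _).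
by near: M; apply: nbhs_pinfty_ge; rewrite num_real.
Unshelve. all: by end_near.
Qed.

Lemma closure_normP A y :
  closure A y <-> forall eta, 0 < eta -> exists2 z, A z & `|y - z| < eta.
Proof.
split=> [Ay eta eta0 | Ay B /nbhs_ballP[eta eta0 yB]].
  have [z [Az yz]] := Ay _ (nbhsx_ballx y eta eta0).
  by exists z => //; move: yz; rewrite -ball_normE.
have [z Az yz] := Ay _ eta0; exists z; split => //.
by apply: yB; rewrite -ball_normE.
Qed.

Lemma closure_ball_conv {C x0 q} {rho l : R} : convexS C -> C x0 ->
  ball q rho `<=` closure C -> 0 <= l < 1 ->
  ball (l *: x0 + (1 - l) *: q) ((1 - l) * rho) `<=` closure C.
Proof.
move=> /convexSP cC Cx0 qC /andP[l0 l1] y; rewrite -ball_normE /ball_ /= => hy.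
have l1' : 0 < 1 - l by rewrite subr_gt0.
have subE u v : l *: x0 + (1 - l) *: u - (l *: x0 + (1 - l) *: v) = (1 - l) *: (u - v).
  by rewrite opprD addrACA subrr add0r scalerBr.
pose w := (1 - l)^-1 *: (y - l *: x0).
have yE : y = l *: x0 + (1 - l) *: w.
  by rewrite /w scalerA mulfV ?gt_eqF // scale1r addrC subrK.
have /closure_normP wC : closure C w.
  apply: qC; rewrite -ball_normE /ball_ /=.
  by move: hy; rewrite {1}yE subE normrZ ger0_norm ?(ltW l1') // ltr_pM2l.
apply/closure_normP => eta eta0.
have [z Cz wz] := wC eta eta0.
exists (l *: x0 + (1 - l) *: z); first by apply: cC; rewrite ?l0 ?(ltW l1).
rewrite yE subE normrZ ger0_norm ?(ltW l1') //.
by rewrite (le_lt_trans _ wz) // ler_piMl // lerBlDr lerDl.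
Qed.

Definition absorbing C := forall v : X, exists2 t : R, 0 < t & C (t *: v).

Lemma core_absorbing A B c r : convexS A -> convexS B -> A c -> B c -> 0 < r ->
  core (setMinus A B) 0 -> absorbing (setMinus A (B `&` ball c r)).
Proof.
move=> /convexSP cA /convexSP cB Ac Bc r0 [_ core0] v.
have [g g0 hg] := core0 v.
have [a [b [Aa [Bb abv]]]] : setMinus A B ((g / 2) *: v).
  by rewrite -[_ *: v]add0r; apply: hg; rewrite ger0_norm ?divr_ge0 ?(ltW g0) //; lra.
have bcr : 0 < `|c - b| + r by rewrite ltr_wpDl.
pose l := r / (`|c - b| + r).
have l01 : 0 <= l <= 1.
  by rewrite /l divr_ge0 ?(ltW r0) ?(ltW bcr) //= ler_pdivrMr // mul1r lerDr.
exists (l * (g / 2)); first by rewrite mulr_gt0 ?divr_gt0.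
exists (l *: a + (1 - l) *: c), (l *: b + (1 - l) *: c).
split; first exact: cA.
split; last by rewrite -scalerA abv scalerBr opprD addrACA subrr addr0.
split; first exact: cB.
rewrite -ball_normE /ball_ /= (le_lt_trans (norm_sub_conv c b c l l01)) //.
rewrite subrr normr0 mulr0 addr0 /l mulrAC ltr_pdivrMr //; nra.
Qed.

End NormedSpace.

Section AbsorbingBanach.
Context {R : realType} {X : completeNormedModType R}.
Implicit Types (C : set X).

Lemma Baire_cover_ball (S : nat -> set X) : (forall x, exists n, S n x) ->
  exists n (p : X) (rho : R), 0 < rho /\ ball p rho `<=` closure (S n).
Proof.
move=> coverS; pose F n := ~` closure (S n).
have : ~ (forall n, open (F n) /\ dense (F n)).
  move=> /Baire /(_ setT (ex_intro _ 0 I) openT) [x [_ Fx]].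
  have [n Sx] := coverS x.
  exact: (Fx n I (subset_closure Sx)).
move=> /existsNP [n /not_andP [[]|]]; first exact/closed_openC/closed_closure.
move=> /denseNE [U [[p pU] UF]].
have /nbhs_ballP [rho rho0 pU'] := open_nbhs_nbhs pU.
exists n, p, rho; split => // y /pU' Uy.
apply: contrapT => ncl.
have : (U `&` F n) y by [].
by rewrite UF.
Qed.

Lemma absorbing_closure_ball {C} : convexS C -> C 0 -> absorbing C ->
  exists q (rho : R), 0 < rho /\ ball q rho `<=` closure C.
Proof.
move=> /convexSP cC C0 aC.
have shrink s z : 0 <= s <= 1 -> C z -> C (s *: z).
  by move=> s01 Cz; have := cC _ _ _ s01 Cz C0; rewrite scaler0 addr0.
have [|n [p [rho [rho0 pS]]]] :=
    Baire_cover_ball (fun n => [set x | C (n.+1%:R^-1 *: x)]).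
  move=> x; have [t t0 Ctx] := aC x; exists (Num.truncn t^-1) => /=.
  have -> : (Num.truncn t^-1).+1%:R^-1 *: x =
      ((Num.truncn t^-1).+1%:R^-1 / t) *: (t *: x) by rewrite scalerA mulfVK ?gt_eqF.
  apply: shrink => //; rewrite divr_ge0 ?invr_ge0 ?(ltW t0) //= ler_pdivrMr // mul1r.
  rewrite -[t in _ <= t]invrK lef_pV2 ?posrE ?invr_gt0 //.
  exact/ltW/truncnS_gt.
set k : R := n.+1%:R; have k0 : 0 < k by [].
have scaleB (u w : X) : k *: u - w = k *: (u - k^-1 *: w).
  by rewrite scalerBr scalerA mulfV ?gt_eqF // scale1r.
exists (k^-1 *: p), (k^-1 * rho); split; first by rewrite mulr_gt0 ?invr_gt0.
move=> y; rewrite -ball_normE /ball_ /= => py.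
apply/closure_normP => eta eta0.
have /closure_normP /(_ (k * eta)) [|z Cz yz] :
    closure [set x | C (k^-1 *: x)] (k *: y).
- apply: pS; rewrite -ball_normE /ball_ /= -opprB scaleB normrN normrZ.
  by rewrite ger0_norm ?(ltW k0) // -ltr_pdivlMl // -opprB normrN.
- by rewrite mulr_gt0.
exists (k^-1 *: z) => //.
by move: yz; rewrite scaleB normrZ ger0_norm ?(ltW k0) // ltr_pM2l.
Qed.

Lemma absorbing_closure_ball0 {C} : convexS C -> C 0 -> absorbing C ->
  exists2 eps : R, 0 < eps & ball 0 eps `<=` closure C.
Proof.
move=> cC C0 aC.
have [q [rho [rho0 qC]]] := absorbing_closure_ball cC C0 aC.
have [t t0 Ctq] := aC (- q).
pose l := (1 + t)^-1.
have t1 : 0 < 1 + t by rewrite addr_gt0.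
have lt : l * t = 1 - l by rewrite /l; field; rewrite gt_eqF.
have l01 : 0 <= l < 1 by rewrite invr_ge0 (ltW t1) /= invf_lt1 // ltrDl.
exists ((1 - l) * rho); first by rewrite mulr_gt0 // subr_gt0; case/andP: l01.
have -> : 0 = l *: (t *: - q) + (1 - l) *: q by rewrite scalerA lt scalerN addNr.
exact: closure_ball_conv cC Ctq qC l01.
Qed.

End AbsorbingBanach.

Section DyadicSeries.
Context {R : realType} {X : normedModType R}.
Implicit Types (A : set X) (c : X^nat).

Definition dyadic_series c : X^nat := series (fun k => (2^-1 : R) ^+ k.+1 *: c k).

Lemma convexS_dyadic_series A c p n : convexS A -> (forall k, A (c k)) -> A p ->
  A (dyadic_series c n + (2^-1 : R) ^+ n *: p).
Proof.
move=> cA Ac; elim: n p => [|n IH] p Ap.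
  by rewrite /dyadic_series /series /= big_geq // add0r expr0 scale1r.
rewrite /dyadic_series seriesSr -addrA.
have -> : (2^-1 : R) ^+ n.+1 *: c n + (2^-1 : R) ^+ n.+1 *: p =
    (2^-1 : R) ^+ n *: (2^-1 *: c n + 2^-1 *: p) by rewrite scalerDr !scalerA -exprSr.
exact: IH (convexS_mid cA (Ac n) Ap).
Qed.

Lemma cvg_expr_half : (fun n => (2^-1 : R) ^+ n) @ \oo --> 0.
Proof. by apply: cvg_expr; rewrite ger0_norm // invf_lt1 // ltr1n. Qed.

Lemma cvg_scale_bounded0 (s : R^nat) c M : s @ \oo --> 0 ->
  (forall n, `|c n| <= M) -> (fun n => s n *: c n) @ \oo --> 0.
Proof.
move=> s0 cM; apply/cvgr0Pnorm_lt => e e0.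
have M1 : 0 < `|M| + 1 by rewrite ltr_wpDl.
near=> n.
have sn : `|s n| < e / (`|M| + 1) by near: n; exact: cvgr0_norm_lt s0 _ (divr_gt0 e0 M1).
have cn : `|c n| <= `|M| + 1 by rewrite (le_trans (cM n)) // (le_trans (ler_norm M)) // lerDl.
rewrite normrZ (le_lt_trans (ler_wpM2l (normr_ge0 _) cn)) //.
by rewrite -ltr_pdivlMr.
Unshelve. all: by end_near.
Qed.

Lemma closed_dyadic_series_lim A c l : closed A -> convexS A ->
  (forall k, A (c k)) -> dyadic_series c @ \oo --> l -> A l.
Proof.
move=> clA cA Ac cl.
have lim_l : (fun n => dyadic_series c n + (2^-1 : R) ^+ n *: c 0) @ \oo --> l.
  rewrite -[l]addr0; apply: cvgD => //.
  exact: cvg_scale_bounded0 (fun=> c 0) _ cvg_expr_half (fun=> lexx _).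
apply: (closed_cvg _ clA _ _ lim_l); apply: nearW => n.
exact: convexS_dyadic_series.
Qed.

Lemma dyadic_series_defect {a b ys} n :
  (forall k, ys k.+1 = 2 *: (ys k - (a k - b k))) ->
  dyadic_series a n - dyadic_series b n = 2^-1 *: ys 0 - (2^-1 : R) ^+ n.+1 *: ys n.
Proof.
move=> ysS; elim: n => [|n IH].
  by rewrite /dyadic_series /series /= !big_geq // subr0 expr1 subrr.
rewrite /dyadic_series !seriesSr opprD addrACA -/(dyadic_series a n) -/(dyadic_series b n).
rewrite IH ysS scalerA -scalerBr.
have -> : (2^-1 : R) ^+ n.+2 * 2 = (2^-1) ^+ n.+1 by rewrite exprSr -mulrA mulVf ?mulr1.
by rewrite [in RHS]scalerBr opprB addrA addrAC.
Qed.

End DyadicSeries.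

Section DyadicIteration.
Context {R : realType} {X : completeNormedModType R}.
Implicit Types (c : X^nat).

Lemma cvg_dyadic_series c M : (forall k, `|c k| <= M) -> cvgn (dyadic_series c).
Proof.
move=> cM; have M0 : 0 <= M := le_trans (normr_ge0 _) (cM 0).
apply: normed_cvg; rewrite /normed_series_of /=.
apply: (@series_le_cvg R _ (geometric M (2^-1 : R))).
- by move=> n.
- by move=> n; rewrite geometric_ge0.
- move=> n /=; rewrite normrZ ger0_norm ?exprn_ge0 // /geometric /= mulrC.
  by rewrite ler_pM ?exprn_ge0 // exprSr ler_piMr ?exprn_ge0 // invf_le1 ?ler1n.
- by apply: is_cvg_geometric_series; rewrite ger0_norm // invf_lt1 // ltr1n.
Qed.

Lemma setMinus_dyadic_limit {A1 A2 : set X} {a b ys : X^nat} {M E : R} :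
  closed A1 -> closed A2 -> convexS A1 -> convexS A2 ->
  (forall n, A1 (a n)) -> (forall n, A2 (b n)) ->
  (forall n, `|b n| <= M) -> (forall n, `|ys n| <= E) ->
  (forall n, ys n.+1 = 2 *: (ys n - (a n - b n))) ->
  setMinus A1 A2 (2^-1 *: ys 0).
Proof.
move=> clA1 clA2 cA1 cA2 A1a A2b bM ysE ysS.
have sb_lim : dyadic_series b @ \oo --> limn (dyadic_series b).
  exact: cvg_dyadic_series bM.
have sa_lim : dyadic_series a @ \oo --> limn (dyadic_series b) + 2^-1 *: ys 0.
  have -> : dyadic_series a = fun n =>
      dyadic_series b n + (2^-1 *: ys 0 - (2^-1 : R) ^+ n.+1 *: ys n).
    by apply/funext => n; rewrite -(dyadic_series_defect n ysS) addrC subrK.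
  apply: cvgD => //; rewrite -[X in _ --> X]subr0; apply: cvgB; first exact: cvg_cst.
  apply: cvg_scale_bounded0 ysE.
  have half_n := @cvg_expr_half R; rewrite -cvg_shiftS in half_n.
  exact: half_n.
exists (limn (dyadic_series b) + 2^-1 *: ys 0), (limn (dyadic_series b)).
split; first exact: closed_dyadic_series_lim sa_lim.
split; first exact: closed_dyadic_series_lim sb_lim.
by rewrite addrAC subrr add0r.
Qed.

Lemma ball_closure_setMinus {A1 A2 : set X} {M eps : R} :
  closed A1 -> closed A2 -> convexS A1 -> convexS A2 -> (forall b, A2 b -> `|b| <= M) ->
  ball 0 eps `<=` closure (setMinus A1 A2) -> ball 0 (eps / 2) `<=` setMinus A1 A2.
Proof.
move=> clA1 clA2 cA1 cA2 A2M epsC y; rewrite -ball_normE /ball_ /= sub0r normrN => hy.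
have approx w : exists p : X * X,
    `|w| < eps -> [/\ A1 p.1, A2 p.2 & `|w - (p.1 - p.2)| < eps / 2].
  have [w_lt|_] := ltP `|w| eps; last by exists (0, 0).
  have eps0 : 0 < eps by exact: le_lt_trans (normr_ge0 w) w_lt.
  have /closure_normP /(_ (eps / 2)) [|_ [a [b [Aa [Bb ->]]]] wab] :
      closure (setMinus A1 A2) w.
  - by apply: epsC; rewrite -ball_normE /ball_ /= sub0r normrN.
  - by rewrite divr_gt0.
  by exists (a, b).
have [f hf] := choice approx.
pose ys n := iter n (fun w => 2 *: (w - ((f w).1 - (f w).2))) (2 *: y).
have ys_lt n : `|ys n| < eps.
  elim: n => [|n IH] /=; first by rewrite normrZ ger0_norm //; lra.
  by have [_ _] := hf _ IH; rewrite normrZ ger0_norm //; lra.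
pose a n := (f (ys n)).1; pose b n := (f (ys n)).2.
have A1a n : A1 (a n) by case: (hf _ (ys_lt n)).
have A2b n : A2 (b n) by case: (hf _ (ys_lt n)).
have := setMinus_dyadic_limit clA1 clA2 cA1 cA2 A1a A2b (fun n => A2M _ (A2b n))
  (fun n => ltW (ys_lt n)) (fun n => erefl).
by rewrite scalerA mulVf ?scale1r.
Qed.
End DyadicIteration.

Theorem proposition3p3 (R : realType) (X : completeNormedModType R)
  (Omega1 Omega2 : set X) :
  reflexive_space X ->
  closed Omega1 -> closed Omega2 -> convexS Omega1 -> convexS Omega2 ->
  (interior (setMinus Omega1 Omega2) !=set0) ->
  core (setMinus Omega1 Omega2) 0 ->
  forall xbar : X, (Omega1 `&` Omega2) xbar ->
  exists V : set X,
    [/\ nbhs xbar V, bounded_set V, convexS V &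
        (interior (setMinus Omega1 (Omega2 `&` V))) 0].
Proof.
move=> _ clO1 clO2 cO1 cO2 _ core0 xbar [xO1 xO2].
pose K := setMinus Omega1 (Omega2 `&` ball xbar 1).
have [eps eps0 epsK] : exists2 eps : R, 0 < eps & ball 0 eps `<=` closure K.
  apply: absorbing_closure_ball0.
  - exact/convexS_setMinus/convexS_setI/convexS_ball.
  - exists xbar, xbar; split => //; split; last by rewrite subrr.
    by split => //; exact: ballxx.
  - exact: core_absorbing.
pose A2 := Omega2 `&` closed_ball_ Num.norm xbar 1.
have A2M b : A2 b -> `|b| <= `|xbar| + 1.
  by case=> _ xb; rewrite (le_trans (ler_norm_dist xbar b)) // lerD2l.
have KA2 : K `<=` setMinus Omega1 A2.
  apply: setMinusS => // b [bO2]; rewrite -ball_normE => xb.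
  by split => //; exact: ltW.
have clA2 : closed A2 by apply: closedI => //; exact: closed_closed_ball_.
have epsA2 := ball_closure_setMinus clO1 clA2 cO1
  (convexS_setI cO2 (convexS_closed_ball _ _)) A2M (subset_trans epsK (closureS KA2)).
exists (ball xbar 2); split.
- exact: nbhsx_ballx.
- exact: bounded_ball.
- exact: convexS_ball.
- apply/nbhs_ballP; exists (eps / 2); first exact: divr_gt0.
  move=> z /epsA2; apply: setMinusS => // b [bO2 xb]; split => //.
  by rewrite -ball_normE /ball_ /= (le_lt_trans xb) // ltr1n.
Qed.
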